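(* Let $a,b,c\in\mathbb{R}$ and let $(u(\tau),v(\tau),w(\tau))$ be a solution, with $u,v,w$ pairwise distinct, of $$u'=\frac{c}{u-v}+\frac{b}{u-w},\quad v'=\frac{a}{v-w}+\frac{c}{v-u},\quad w'=\frac{b}{w-u}+\frac{a}{w-v}.$$ Set $\zeta=\frac{1}{\sqrt3}(u+v+w)$, $\eta=\frac{1}{\sqrt2}(u-v)$, $\xi=\frac1{\sqrt6}(u+v-2w)$. Then $\zeta$ is constant along the solution and $$\eta'=\frac{c}{\eta}+\frac{b}{\sqrt3\,\xi+\eta}-\frac{a}{\sqrt3\,\xi-\eta},\qquad \xi'=\sqrt3\Big(\frac{b}{\sqrt3\,\xi+\eta}+\frac{a}{\sqrt3\,\xi-\eta}\Big).$$ Moreover this planar system is a gradient system: $(\eta',\xi')=(\partial_\eta \tilde F,\partial_\xi \tilde F)$ with $\tilde F(\eta,\xi)=c\ln|\eta|+b\ln|\sqrt3\,\xi+\eta|+a\ln|\sqrt3\,\xi-\eta|$.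
   Context: Prime denotes derivative with respect to the (real) time variable $\tau$. *)

From Stdlib Require Import Reals.
From Coquelicot Require Import Coquelicot.
Open Scope R_scope.

Definition in_interval (lo hi : Rbar) (t : R) : Prop :=
  Rbar_lt lo t /\ Rbar_lt t hi.

Definition rhs_u (a b c u v w : R) : R := c / (u - v) + b / (u - w).
Definition rhs_v (a b c u v w : R) : R := a / (v - w) + c / (v - u).
Definition rhs_w (a b c u v w : R) : R := b / (w - u) + a / (w - v).

Definition zeta_c (u v w : R) : R := / sqrt 3 * (u + v + w).
Definition eta_c (u v w : R) : R := / sqrt 2 * (u - v).
Definition xi_c (u v w : R) : R := / sqrt 6 * (u + v - 2 * w).

Definition rhs_eta (a b c eta xi : R) : R :=
  c / eta + b / (sqrt 3 * xi + eta) - a / (sqrt 3 * xi - eta).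
Definition rhs_xi (a b c eta xi : R) : R :=
  sqrt 3 * (b / (sqrt 3 * xi + eta) + a / (sqrt 3 * xi - eta)).

Definition Ftilde (a b c eta xi : R) : R :=
  c * ln (Rabs eta) + b * ln (Rabs (sqrt 3 * xi + eta))
  + a * ln (Rabs (sqrt 3 * xi - eta)).

(* The sum u + v + w has derivative rhs_u + rhs_v + rhs_w, which vanishes because the
   pairwise terms cancel (c/(u-v) + c/(v-u) = 0 etc.), so zeta is constant.  The
   coordinates (eta, xi) are linear in (u, v, w), with sqrt 3 xi + eta = sqrt 2 (u - w)
   and sqrt 3 xi - eta = sqrt 2 (v - w); substituting these into the transformed
   right-hand sides gives the planar system, and differentiating c ln|eta| + ... term by
   term (d/dy ln|y| = 1/y) shows that it is the gradient of Ftilde. *)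

From Stdlib Require Import Reals Lra.
From Coquelicot Require Import Coquelicot.
Open Scope R_scope.

Lemma in_interval_inhabited (lo hi : Rbar) :
  Rbar_lt lo hi -> exists t, in_interval lo hi t.
Proof.
intros Hlh; destruct lo as [l| |], hi as [h| |]; simpl in Hlh; try contradiction.
- exists ((l + h) / 2); split; simpl; lra.
- exists (l + 1); split; simpl; auto; lra.
- exists (h - 1); split; simpl; auto; lra.
- exists 0; split; simpl; auto.
Qed.

Lemma in_interval_between (lo hi : Rbar) (t0 t x : R) :
  in_interval lo hi t0 -> in_interval lo hi t ->
  Rmin t0 t <= x <= Rmax t0 t -> in_interval lo hi x.
Proof.
intros [Hlo0 Hhi0] [Hlo Hhi] Hx.
assert (Hl : Rbar_lt lo (Rmin t0 t)) by (apply Rmin_case; assumption).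
assert (Hh : Rbar_lt (Rmax t0 t) hi) by (apply Rmax_case; assumption).
split.
- apply (Rbar_lt_le_trans _ _ _ Hl); simpl; lra.
- apply (Rbar_le_lt_trans _ (Rmax t0 t)); simpl; [lra | assumption].
Qed.

Lemma is_derive_zero_const_interval (lo hi : Rbar) (f : R -> R) :
  (forall t, in_interval lo hi t -> is_derive f t 0) ->
  forall t0 t, in_interval lo hi t0 -> in_interval lo hi t -> f t = f t0.
Proof.
intros Df t0 t Ht0 Ht.
assert (Dx : forall x, Rmin t0 t <= x <= Rmax t0 t -> is_derive f x 0)
  by (intros x Hx; apply Df, (in_interval_between lo hi t0 t); assumption).
destruct (MVT_gen f t0 t (fun _ => 0)) as [x [_ Hx]].
- intros x Hx; apply Dx; lra.
- intros x Hx; apply continuity_pt_filterlim, (ex_derive_continuous f).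
  exists 0; apply Dx; assumption.
- simpl in Hx; lra.
Qed.

Lemma sign_Rinv_Rabs (y : R) : y <> 0 -> sign y * / Rabs y = / y.
Proof.
intros Hy; destruct (Rlt_or_le 0 y) as [Hpos | Hle].
- rewrite (sign_eq_1 _ Hpos), Rabs_pos_eq by lra; ring.
- assert (Hneg : y < 0) by lra.
  rewrite (sign_eq_m1 _ Hneg), Rabs_left by lra; field; assumption.
Qed.

Section Gradient.

Variables (a b c e x : R).
Hypotheses (He : e <> 0) (Hp : sqrt 3 * x + e <> 0) (Hm : sqrt 3 * x - e <> 0).

Let Hm_opp : sqrt 3 * x + - e <> 0.
Proof. intro; apply Hm; lra. Qed.

Lemma is_derive_Ftilde_eta :
  is_derive (fun e => Ftilde a b c e x) e (rhs_eta a b c e x).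
Proof.
unfold Ftilde, rhs_eta; auto_derive.
- repeat split; auto; apply Rabs_pos_lt; assumption.
- replace (sqrt 3 * x + - e) with (sqrt 3 * x - e) by ring.
  rewrite !Rmult_1_l, !Rmult_assoc, !sign_Rinv_Rabs by assumption.
  unfold Rdiv; ring.
Qed.

Lemma is_derive_Ftilde_xi :
  is_derive (fun x => Ftilde a b c e x) x (rhs_xi a b c e x).
Proof.
unfold Ftilde, rhs_xi; auto_derive.
- repeat split; auto; apply Rabs_pos_lt; assumption.
- replace (sqrt 3 * x + - e) with (sqrt 3 * x - e) by ring.
  rewrite !Rmult_assoc, !sign_Rinv_Rabs by assumption.
  unfold Rdiv; ring.
Qed.

End Gradient.

Section Coordinates.

Variables (a b c u v w : R).
Hypotheses (Huv : u <> v) (Hvw : v <> w) (Huw : u <> w).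

Let sqrt2_pos : 0 < sqrt 2.
Proof. apply sqrt_lt_R0; lra. Qed.

Let sqrt3_pos : 0 < sqrt 3.
Proof. apply sqrt_lt_R0; lra. Qed.

Let sqrt2_sqr : sqrt 2 * sqrt 2 = 2.
Proof. apply sqrt_sqrt; lra. Qed.

Let sqrt3_sqr : sqrt 3 * sqrt 3 = 3.
Proof. apply sqrt_sqrt; lra. Qed.

Let sqrt6_eq : sqrt 6 = sqrt 2 * sqrt 3.
Proof. replace 6 with (2 * 3) by ring; apply sqrt_mult; lra. Qed.

Let Hvu : v - u <> 0. Proof. lra. Qed.
Let Hwu : w - u <> 0. Proof. lra. Qed.
Let Hwv : w - v <> 0. Proof. lra. Qed.

Lemma rhs_sum_eq0 : rhs_u a b c u v w + rhs_v a b c u v w + rhs_w a b c u v w = 0.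
Proof. unfold rhs_u, rhs_v, rhs_w; field; repeat split; lra. Qed.

Lemma eta_c_neq0 : eta_c u v w <> 0.
Proof.
unfold eta_c; apply Rmult_integral_contrapositive; split.
- apply Rinv_neq_0_compat; lra.
- lra.
Qed.

Lemma sqrt3_xi_add_eta : sqrt 3 * xi_c u v w + eta_c u v w = sqrt 2 * (u - w).
Proof. unfold xi_c, eta_c; rewrite sqrt6_eq; field [sqrt2_sqr]; lra. Qed.

Lemma sqrt3_xi_sub_eta : sqrt 3 * xi_c u v w - eta_c u v w = sqrt 2 * (v - w).
Proof. unfold xi_c, eta_c; rewrite sqrt6_eq; field [sqrt2_sqr]; lra. Qed.

Lemma sqrt3_xi_add_eta_neq0 : sqrt 3 * xi_c u v w + eta_c u v w <> 0.
Proof. rewrite sqrt3_xi_add_eta; apply Rmult_integral_contrapositive; split; lra. Qed.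

Lemma sqrt3_xi_sub_eta_neq0 : sqrt 3 * xi_c u v w - eta_c u v w <> 0.
Proof. rewrite sqrt3_xi_sub_eta; apply Rmult_integral_contrapositive; split; lra. Qed.

Lemma rhs_eta_c :
  rhs_eta a b c (eta_c u v w) (xi_c u v w)
  = / sqrt 2 * (rhs_u a b c u v w - rhs_v a b c u v w).
Proof.
unfold rhs_eta; rewrite sqrt3_xi_add_eta, sqrt3_xi_sub_eta.
unfold eta_c, rhs_u, rhs_v; field [sqrt2_sqr]; repeat split; lra.
Qed.

Lemma rhs_xi_c :
  rhs_xi a b c (eta_c u v w) (xi_c u v w)
  = / sqrt 6 * (rhs_u a b c u v w + rhs_v a b c u v w - 2 * rhs_w a b c u v w).
Proof.
unfold rhs_xi; rewrite sqrt3_xi_add_eta, sqrt3_xi_sub_eta, sqrt6_eq.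
unfold rhs_u, rhs_v, rhs_w; field [sqrt2_sqr sqrt3_sqr]; repeat split; lra.
Qed.

End Coordinates.

Section Trajectory.

Variables (u v w : R -> R) (t du dv dw : R).
Hypotheses (Du : is_derive u t du) (Dv : is_derive v t dv) (Dw : is_derive w t dw).

Lemma is_derive_zeta_c :
  is_derive (fun s => zeta_c (u s) (v s) (w s)) t (/ sqrt 3 * (du + dv + dw)).
Proof.
apply is_derive_scal, (is_derive_plus (fun s => u s + v s) w); [|assumption].
apply (is_derive_plus u v); assumption.
Qed.

Lemma is_derive_eta_c :
  is_derive (fun s => eta_c (u s) (v s) (w s)) t (/ sqrt 2 * (du - dv)).
Proof. apply is_derive_scal, (is_derive_minus u v); assumption. Qed.

Lemma is_derive_xi_c :
  is_derive (fun s => xi_c (u s) (v s) (w s)) t (/ sqrt 6 * (du + dv - 2 * dw)).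
Proof.
apply is_derive_scal, (is_derive_minus (fun s => u s + v s) (fun s => 2 * w s)).
- apply (is_derive_plus u v); assumption.
- apply is_derive_scal; assumption.
Qed.

End Trajectory.

Theorem mainTheorem4 (a b c : R) (lo hi : Rbar) (u v w : R -> R) :
  Rbar_lt lo hi ->
  (forall t, in_interval lo hi t ->
     u t <> v t /\ v t <> w t /\ u t <> w t) ->
  (forall t, in_interval lo hi t ->
     is_derive u t (rhs_u a b c (u t) (v t) (w t)) /\
     is_derive v t (rhs_v a b c (u t) (v t) (w t)) /\
     is_derive w t (rhs_w a b c (u t) (v t) (w t))) ->
  (exists z0 : R, forall t, in_interval lo hi t ->
     zeta_c (u t) (v t) (w t) = z0) /\
  (forall t, in_interval lo hi t ->
     let eta := fun s => eta_c (u s) (v s) (w s) in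
     let xi := fun s => xi_c (u s) (v s) (w s) in
     is_derive eta t (rhs_eta a b c (eta t) (xi t)) /\
     is_derive xi t (rhs_xi a b c (eta t) (xi t)) /\
     is_derive (fun e => Ftilde a b c e (xi t)) (eta t)
       (rhs_eta a b c (eta t) (xi t)) /\
     is_derive (fun x => Ftilde a b c (eta t) x) (xi t)
       (rhs_xi a b c (eta t) (xi t))).
Proof.
intros Hlh Hdist Hder; split.
- destruct (in_interval_inhabited lo hi Hlh) as [t0 Ht0].
  exists (zeta_c (u t0) (v t0) (w t0)).
  intros t1 Ht1.
  apply (is_derive_zero_const_interval lo hi (fun s => zeta_c (u s) (v s) (w s)));
    [|assumption..].
  intros t Ht; destruct (Hder t Ht) as [Du [Dv Dw]]; destruct (Hdist t Ht) as [Huv [Hvw Huw]].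
  assert (Dz := is_derive_zeta_c u v w t _ _ _ Du Dv Dw).
  rewrite rhs_sum_eq0, Rmult_0_r in Dz by assumption; exact Dz.
- intros t Ht eta xi; destruct (Hder t Ht) as [Du [Dv Dw]]; destruct (Hdist t Ht) as [Huv [Hvw Huw]].
  subst eta xi; cbv beta.
  split; [|split; [|split]].
  + rewrite rhs_eta_c by assumption; apply is_derive_eta_c; assumption.
  + rewrite rhs_xi_c by assumption; apply is_derive_xi_c; assumption.
  + apply is_derive_Ftilde_eta;
      [apply eta_c_neq0 | apply sqrt3_xi_add_eta_neq0 | apply sqrt3_xi_sub_eta_neq0]; assumption.
  + apply is_derive_Ftilde_xi;
      [apply eta_c_neq0 | apply sqrt3_xi_add_eta_neq0 | apply sqrt3_xi_sub_eta_neq0]; assumption.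
Qed.
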